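(* Let $V\subset\mathbb{R}^d$ be a finite non-degenerate antichain and let $p\in S_V$ be a characteristic point. Then every minimum $v\in D_p$ is contained in some minimal generating set of $p$.
   Context: For $x,y\in\mathbb{R}^d$, $x\le y$ (dominance order) means $x_i\le y_i$ for all $i$; $y\rhd x$ means $y_i>x_i$ for all $i$; $y\rhd_i x$ means $y_i=x_i$ and $y_j>x_j$ for all $j\neq i$. The join is the componentwise maximum. $V\subset\mathbb{R}^d$ is a finite antichain in the dominance order (elements are called minima). The orthogonal surface $S_V$ is the topological boundary of $\langle V\rangle=\{x: x\ge v\text{ for some }v\in V\}$; equivalently $p\in S_V$ iff there is $v\in V$ with $v\le p$ and no $w\in V$ with $p\rhd w$. For $p\in S_V$, $D_p=\{v\in V:v\le p\}$. A generating set for $p\in S_V$ is a nonempty $G\subseteq D_p$ with $\bigvee G=p$; it is minimal if $\bigvee(G\setminus\{v\})\neq p$ for every $v\in G$. Flats: $U_i(v)=\{p\in S_V: p\rhd_i v\}$; for $v,w\in V$ put $v\sim_i w$ iff $U_i(v)\cap U_i(w)\neq\emptyset$, and let $\sim_i^c$ be the reflexive–transitive closure; the $i$-flat of $v$ is $F_i(v)=\overline{\bigcup_{w\sim_i^c v}U_i(w)}$, and an $i$-flat is any set of this form. A characteristic point is a point of $S_V$ that lies in some $i$-flat for every $i\in\{1,\dots,d\}$. $V$ is degenerate if there exist a characteristic point $p$, minima $x,u,v\in D_p$ and coordinates $i\neq j$ with $u_i<v_i=x_i=p_i$ and $v_j<u_j=x_j=p_j$; otherwise non-degenerate. *)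

From HB Require Import structures.
From mathcomp Require Import all_boot all_order all_algebra.
From mathcomp Require Import reals.
From Stdlib Require Import Relation_Operators.
Set Implicit Arguments. Unset Strict Implicit. Unset Printing Implicit Defensive.
Import Order.TTheory GRing.Theory Num.Theory.
Local Open Scope ring_scope.

Section OrthSurf.
Variables (R : realType) (d : nat).
Notation pt := {ffun 'I_d -> R}.

Definition dle (x y : pt) : Prop := forall i, x i <= y i.
Definition drhd (y x : pt) : Prop := forall i, x i < y i.
Definition drhdi (i : 'I_d) (y x : pt) : Prop :=
  y i = x i /\ forall j, j != i -> x j < y j.

Definition ptmax (x y : pt) : pt := [ffun i => Num.max (x i) (y i)].

Definition is_join (G : seq pt) (p : pt) : Prop :=
  match G with
  | [::] => False
  | g :: gs => foldr ptmax g gs = p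
  end.

Definition antichain (V : seq pt) : Prop :=
  forall v w, v \in V -> w \in V -> dle v w -> v = w.

Definition onS (V : seq pt) (p : pt) : Prop :=
  (exists v, v \in V /\ dle v p) /\ ~ (exists w, w \in V /\ drhd p w).

Definition inD (V : seq pt) (p v : pt) : Prop := v \in V /\ dle v p.

(* generating sets (finite sets modelled by duplicate-free sequences) *)
Definition generating (V : seq pt) (p : pt) (G : seq pt) : Prop :=
  uniq G /\ (forall v, v \in G -> inD V p v) /\ is_join G p.

(* minimal: removing any element breaks the join (join of the empty set is never p) *)
Definition min_generating (V : seq pt) (p : pt) (G : seq pt) : Prop :=
  generating V p G /\ forall v, v \in G -> ~ is_join (rem v G) p.

(* topological closure in R^d (Euclidean topology, via the sup-distance) *)
Definition closure (A : pt -> Prop) (x : pt) : Prop :=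
  forall e : R, 0 < e -> exists y, A y /\ forall i, `|x i - y i| < e.

Definition Ui (V : seq pt) (i : 'I_d) (v : pt) (p : pt) : Prop :=
  onS V p /\ drhdi i p v.

Definition simi (V : seq pt) (i : 'I_d) (v w : pt) : Prop :=
  v \in V /\ w \in V /\ exists p, Ui V i v p /\ Ui V i w p.

Definition flat (V : seq pt) (i : 'I_d) (v : pt) : pt -> Prop :=
  closure (fun p => exists w, w \in V /\ clos_refl_trans pt (simi V i) w v /\ Ui V i w p).

Definition characteristic (V : seq pt) (p : pt) : Prop :=
  onS V p /\ forall i : 'I_d, exists v, v \in V /\ flat V i v p.

Definition degenerate (V : seq pt) : Prop :=
  exists p x u v (i j : 'I_d),
    [/\ characteristic V p, inD V p x, inD V p u, inD V p v & i != j] /\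
    (u i < v i /\ v i = x i /\ x i = p i) /\ (v j < u j /\ u j = x j /\ x j = p j).

End OrthSurf.

(** Every minimum of [D_p] attains [p] in some coordinate, since [p] lies on
    the surface.  Among these coordinates pick [k] for which the number of
    minima of [D_p] attaining [p] at [k] is smallest.  Non-degeneracy then
    forces every minimum of [D_p] attaining [p] at [k] to attain [p] wherever
    [v] does.  For each coordinate [i] with [v i < p i], the [i]-flat through
    [p] yields a minimum [w] of [D_p] with [w i = p i] that falls short of [p]
    in some coordinate where [v] attains it; hence [w k < p k].  So [v] and
    the minima of [D_p] below [p] at [k] generate [p], every minimal
    generating subset still needs a minimum attaining [p] at [k], and [v] is
    the only one available. *)
From HB Require Import structures.
From mathcomp Require Import all_boot all_order all_algebra.
From mathcomp Require Import reals.
From mathcomp Require Import lra.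
From Stdlib Require Import Classical.
Set Implicit Arguments. Unset Strict Implicit. Unset Printing Implicit Defensive.
Import Order.TTheory GRing.Theory Num.Theory.
Local Open Scope ring_scope.

Lemma count_lt_subpred (T : eqType) (P Q : pred T) (s : seq T) x :
  {in s, subpred P Q} -> x \in s -> Q x -> ~~ P x -> (count P s < count Q s)%N.
Proof.
move=> sPQ xs Qx Px.
have := count_predC P (filter Q s); rewrite !count_filter size_filter.
rewrite (@eq_in_count _ (predI P Q) P); last first.
  by move=> y ys /=; case Py: (P y) => //=; apply: sPQ.
move=> <-; rewrite -[X in (X < _)%N]addn0 ltn_add2l -has_count.
by apply/hasP; exists x => //=; rewrite Px Qx.
Qed.

Lemma exists_pos_le_pos (R : realType) (s : seq R) :
  exists2 e, 0 < e & forall x, x \in s -> 0 < x -> e <= x.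
Proof.
elim: s => [|x s [e e0 le_e]]; first by exists 1.
case: (ltP 0 x) => [x0|x_le0].
- exists (Num.min x e); first by rewrite lt_min x0 e0.
  move=> y; rewrite inE ge_min => /orP[/eqP->|ys] y0; first by rewrite lexx.
  by rewrite le_e ?orbT.
- exists e => // y; rewrite inE => /orP[/eqP->|ys] y0; last exact: le_e.
  by move: (lt_le_trans y0 x_le0); rewrite ltxx.
Qed.

Section OrthogonalSurface.
Variables (R : realType) (d : nat).
Local Notation pt := {ffun 'I_d -> R}.

Lemma foldr_ptmax_ge (g : pt) gs a :
  a \in g :: gs -> dle a (foldr (@ptmax R d) g gs).
Proof.
elim: gs a => [|h t IH] a; first by rewrite inE => /eqP-> i.
move=> aP i; rewrite /= ffunE le_max.
move: aP; rewrite !inE => /or3P[/eqP->|/eqP->|at_].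
- by rewrite (IH g (mem_head _ _) i) orbT.
- by rewrite lexx.
- by rewrite (IH a _ i) ?orbT // inE at_ orbT.
Qed.

Lemma foldr_ptmax_attained (g : pt) gs i :
  exists2 a, a \in g :: gs & a i = foldr (@ptmax R d) g gs i.
Proof.
elim: gs => [|h t [a a_in ai]] /=; first by exists g; rewrite ?mem_head.
rewrite ffunE maxEle; case: ifP => _.
  by exists a => //; move: a_in; rewrite !inE => /orP[]->; rewrite ?orbT.
by exists h => //; rewrite !inE eqxx orbT.
Qed.

Lemma is_joinP (G : seq pt) p :
  is_join G p <->
  [/\ G != [::], forall a, a \in G -> dle a p
    & forall i, exists2 a, a \in G & a i = p i].
Proof.
case: G => [|g gs]; first by split=> [|[]].
split=> [/= <-|[_ G_le G_att]].
  by split=> // [a|i]; [apply: foldr_ptmax_ge | apply: foldr_ptmax_attained].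
apply/ffunP => i; apply/eqP; rewrite eq_le; apply/andP; split.
  by have [a a_in <-] := foldr_ptmax_attained g gs i; apply: G_le.
by have [b b_in <-] := G_att i; apply: foldr_ptmax_ge.
Qed.

Section Surface.
Variables (V : seq pt) (p : pt).

Lemma onS_tight_coordinate v : onS V p -> inD V p v -> exists k, v k = p k.
Proof.
move=> [_ not_above] [vV vp].
have : ~~ [forall k, v k < p k].
  by apply/negP => /forallP v_lt; apply: not_above; exists v.
by case/forallPn => k; rewrite -leNgt => pv; exists k; apply/eqP; rewrite eq_le vp.
Qed.

Lemma min_generating_sub G :
  generating V p G -> exists G', min_generating V p G' /\ {subset G' <= G}.
Proof.
move: {2}(size G) (leqnn (size G)) => n; elim: n G => [|n IH] G.
  by rewrite leqn0 size_eq0 => /eqP-> [_ [_]].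
move=> sizeG [uniqG [G_D G_join]].
case: (classic (exists2 u, u \in G & is_join (rem u G) p)) => [[u uG rem_join]|].
- have gen_rem : generating V p (rem u G).
    by split; [exact: rem_uniq | split=> // a /mem_rem; apply: G_D].
  have size_rem_u : (size (rem u G) <= n)%N.
    by rewrite size_rem // -subn1 leq_subLR add1n.
  have [G' [minG' subG']] := IH _ size_rem_u gen_rem.
  by exists G'; split=> // a /subG' /mem_rem.
- by move=> no_rem; exists G; do !split=> //; move=> u uG ?; apply: no_rem; exists u.
Qed.

Lemma mem_min_generating v k :
  inD V p v -> v k = p k ->
  (forall i, v i < p i -> exists w, [/\ inD V p w, w i = p i & w k < p k]) ->
  exists G, min_generating V p G /\ v \in G.
Proof.
move=> [vV vp] vk witness.
pose below_k := [pred w : pt | [forall j, w j <= p j] && (w k < p k)].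
pose G := v :: undup (filter below_k V).
have memG w : w \in G -> w = v \/ inD V p w /\ w k < p k.
  rewrite inE mem_undup mem_filter => /orP[/eqP->|/andP[/andP[/forallP wp wk] wV]].
    by left.
  by right.
have in_below w : inD V p w -> w k < p k -> w \in G.
  move=> [wV wp] wk; rewrite inE mem_undup mem_filter /= wV wk !andbT.
  by apply/orP; right; apply/forallP.
have genG : generating V p G.
  split; first by rewrite /= undup_uniq mem_undup mem_filter /= vk ltxx !andbF.
  have G_D w : w \in G -> inD V p w by case/memG=> [->|[]].
  split=> //; apply/is_joinP; split=> // [w /G_D[]//|i].
  have [vi|vi] := eqVneq (v i) (p i); first by exists v; rewrite ?mem_head.
  have [|w [wD wi wk]] := witness i; first by rewrite lt_neqAle vi vp.
  by exists w => //; apply: in_below.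
have [G' [minG' subG']] := min_generating_sub genG.
exists G'; split=> //.
have [_ _ G'_att] := (is_joinP G' p).1 minG'.1.2.2.
have [a aG' ak] := G'_att k.
case/memG: (subG' a aG') => [<-//|[_ ak_lt]].
by rewrite ak ltxx in ak_lt.
Qed.

Lemma near_preserves_strict_sides :
  exists2 e, 0 < e & forall q : pt, (forall j, `|p j - q j| < e) ->
    forall w j, w \in V -> (w j < p j -> w j < q j) /\ (p j < w j -> q j < w j).
Proof.
have [e e0 le_e] :=
  exists_pos_le_pos [seq `|p j - w j| | w : pt <- V, j : 'I_d <- enum 'I_d].
exists e => // q near_q w j wV.
have gap : 0 < `|p j - w j| -> e <= `|p j - w j|.
  by apply: le_e; apply: allpairs_f; rewrite ?mem_enum.
have := near_q j; rewrite ltr_norml => /andP[? ?].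
split=> lt_wp.
- by move: gap; rewrite gtr0_norm ?subr_gt0 // => /(_ lt_wp); lra.
- by move: gap; rewrite ltr0_norm ?subr_lt0 // opprB subr_gt0 => /(_ lt_wp); lra.
Qed.

Lemma flat_witness i v0 :
  flat V i v0 p ->
  exists w, [/\ inD V p w, w i = p i &
    forall y, inD V p y -> y i < p i -> exists2 j, y j = p j & w j < p j].
Proof.
(* Only one point [q] of the flat close to [p] is used, with the minimum [w]
   such that [q] lies in [U_i(w)]. *)
move=> p_flat; have [e e0 near] := near_preserves_strict_sides.
have [q [[w [wV [_ [[_ q_not_above] [qiw wq]]]]] near_q]] := p_flat e e0.
have wi : w i = p i.
  have [wp|pw|//] := ltgtP (w i) (p i).
  - by have := (near q near_q w i wV).1 wp; rewrite qiw ltxx.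
  - by have := (near q near_q w i wV).2 pw; rewrite qiw ltxx.
have wp : dle w p.
  move=> j; rewrite leNgt; apply/negP => pw.
  have [ji|ji] := eqVneq j i; first by rewrite ji wi ltxx in pw.
  by have := (near q near_q w j wV).2 pw; have := wq j ji; lra.
exists w; split=> // y [yV yp] yi.
have : ~~ [forall j, y j < q j].
  by apply/negP => /forallP yq; apply: q_not_above; exists y.
case/forallPn => j; rewrite -leNgt => qy.
have yj : y j = p j.
  apply/eqP; rewrite eq_le yp leNgt; apply/negP => ypj.
  by have := (near q near_q y j yV).1 ypj; lra.
have ji : j != i by apply: contraTneq yi => <-; rewrite yj ltxx.
by exists j => //; have := wq j ji; lra.
Qed.

Section NonDegenerate.
Hypotheses (nondeg : ~ degenerate V) (p_char : characteristic V p).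

Lemma nondegenerate_tight_sub x a k k' :
  inD V p x -> x k = p k -> x k' = p k' ->
  inD V p a -> a k = p k -> a k' < p k' ->
  forall b, inD V p b -> b k' = p k' -> b k = p k.
Proof.
move=> xD xk xk' aD ak ak' b bD bk'.
apply/eqP; rewrite eq_le (bD.2 k) leNgt; apply/negP => bk.
have kk' : k != k' by apply: contraTneq ak' => <-; rewrite ak ltxx.
apply: nondeg; exists p, x, b, a, k, k'.
by split; [split | split; split=> //; rewrite ?ak ?bk' //].
Qed.

Lemma tight_coordinate_chain v :
  inD V p v -> exists k, v k = p k /\
    forall a, inD V p a -> a k = p k -> forall j, v j = p j -> a j = p j.
Proof.
move=> vD; have [k0 vk0] := onS_tight_coordinate p_char.1 vD.
pose tight j := [pred a : pt | [forall l, a l <= p l] && (a j == p j)].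
have [k /eqP vk k_min] :=
  arg_minnP (fun j => count (tight j) V) (P := fun j => v j == p j) (introT eqP vk0).
exists k; split=> // a [aV ap] ak j vj.
apply/eqP; rewrite eq_le ap /= leNgt; apply/negP => aj.
have sub_jk : {in V, subpred (tight j) (tight k)}.
  move=> b bV /andP[/forallP bp /eqP bj]; apply/andP; split; first exact/forallP.
  by apply/eqP; apply: (nondegenerate_tight_sub vD vk vj (conj aV ap) ak aj).
have := count_lt_subpred sub_jk aV.
rewrite /= ak eqxx (introT forallP ap) (lt_eqF aj) => /(_ isT isT).
by rewrite ltnNge k_min //; apply/eqP.
Qed.

End NonDegenerate.
End Surface.
End OrthogonalSurface.

Theorem corollary4p9 (R : realType) (d : nat) (V : seq {ffun 'I_d -> R}) :
  antichain V -> ~ degenerate V ->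
  forall p : {ffun 'I_d -> R}, characteristic V p ->
  forall v, inD V p v ->
  exists G : seq {ffun 'I_d -> R}, min_generating V p G /\ v \in G.
Proof.
move=> _ nondeg p p_char v vD.
have [k [vk chain]] := tight_coordinate_chain nondeg p_char vD.
apply: (mem_min_generating vD vk) => i vi.
have [v0 [_ p_flat]] := p_char.2 i.
have [w [wD wi w_block]] := flat_witness p_flat.
have [j vj wj] := w_block v vD vi.
exists w; split=> //; rewrite lt_neqAle (wD.2 k) andbT.
by apply: contraTneq wj => wk; rewrite (chain w wD wk j vj) ltxx.
Qed.
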